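(* Let $\tilde{\mathcal D}$ be a finite set of examples, let $\mathrm{sim}:\tilde{\mathcal D}\times\tilde{\mathcal D}\to\mathbb{R}$, let $C:\tilde{\mathcal D}\to[0,\infty)$, let $\tau\ge 0$, and let $\sigma:[0,\infty)\to\mathbb{R}$ be non-decreasing and concave with $\sigma(0)=0$. For $\mathcal S\subseteq\tilde{\mathcal D}$ and $x_i\in\tilde{\mathcal D}$ define $$\hat C_{\mathcal N}(x_i;\mathcal S)=\sum_{x_j\in\mathcal S}\mathbb 1_{[\mathrm{sim}(x_i,x_j)\ge\tau]}\,\mathrm{sim}(x_i,x_j)\,C(x_j),\qquad OBJ(\mathcal S)=\sum_{x_i\in\tilde{\mathcal D}}\sigma\big(\hat C_{\mathcal N}(x_i;\mathcal S)\big).$$ Then $OBJ$ is submodular: for all $\mathcal S\subset\mathcal S'\subseteq\tilde{\mathcal D}$ and all $x\in\tilde{\mathcal D}\setminus\mathcal S'$, $$OBJ(\mathcal S\cup\{x\})-OBJ(\mathcal S)\ge OBJ(\mathcal S'\cup\{x\})-OBJ(\mathcal S').$$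
   Context: In the paper, $\mathrm{sim}$ is the cosine similarity between embeddings of augmentations of two examples, $C$ is a prediction confidence (e.g. maximum softmax probability), $\tau$ is a neighborhood threshold and $\sigma$ is a utility function (e.g. the positive part of $\tanh$). *)

From mathcomp Require Import all_boot all_order all_algebra.
Set Implicit Arguments. Unset Strict Implicit. Unset Printing Implicit Defensive.
Import Order.TTheory GRing.Theory Num.Theory.
Local Open Scope ring_scope.

Definition CN (R : realFieldType) (T : finType) (sim : T -> T -> R) (C : T -> R)
  (tau : R) (S : {set T}) (xi : T) : R :=
  \sum_(xj in S) (if tau <= sim xi xj then 1 else 0) * sim xi xj * C xj.

Definition OBJ (R : realFieldType) (T : finType) (sim : T -> T -> R) (C : T -> R)
  (tau : R) (sigma : R -> R) (S : {set T}) : R :=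
  \sum_(xi : T) sigma (CN sim C tau S xi).

Definition nondecr_nonneg (R : realFieldType) (sigma : R -> R) : Prop :=
  forall x y : R, 0 <= x -> x <= y -> sigma x <= sigma y.

Definition concave_nonneg (R : realFieldType) (sigma : R -> R) : Prop :=
  forall (x y t : R), 0 <= x -> 0 <= y -> 0 <= t -> t <= 1 ->
    t * sigma x + (1 - t) * sigma y <= sigma (t * x + (1 - t) * y).

From mathcomp Require Import all_boot all_order all_algebra.
From mathcomp Require Import ring lra.
Import Order.TTheory GRing.Theory Num.Theory.
Local Open Scope ring_scope.

(* Adding x to S raises every neighbourhood confidence CN(x_i; S) by the same
   nonnegative amount w(x_i, x), independently of S. Since CN is monotone in S
   and a concave function has smaller increments further to the right,
   sigma (CN(x_i; S) + w) - sigma (CN(x_i; S)) decreases as S grows; summing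
   over x_i gives submodularity. *)

Lemma concave_nonneg_increment_antitone (R : realFieldType) (sigma : R -> R)
    (a b d : R) :
  concave_nonneg sigma -> 0 <= a -> a <= b -> 0 <= d ->
  sigma (b + d) - sigma b <= sigma (a + d) - sigma a.
Proof.
move=> hconc a_ge0 le_ab d_ge0.
have [->|d_neq0] := eqVneq d 0; first by rewrite !addr0 !subrr.
have gap_gt0 : 0 < b - a + d by rewrite ltr_wpDl ?subr_ge0 // lt_def d_neq0.
(* b and a + d are the two convex combinations of a and b + d with weights t, 1 - t *)
set t := d / (b - a + d).
have t_ge0 : 0 <= t by rewrite divr_ge0 // ltW.
have t_le1 : t <= 1 by rewrite ler_pdivrMr // mul1r lerDr subr_ge0.
have bd_ge0 : 0 <= b + d by rewrite addr_ge0 // (le_trans a_ge0 le_ab).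
have to_b : t * a + (1 - t) * (b + d) = b by rewrite /t; field; rewrite gt_eqF.
have to_ad : (1 - t) * a + (1 - (1 - t)) * (b + d) = a + d.
  by rewrite /t; field; rewrite gt_eqF.
have := hconc _ _ _ a_ge0 bd_ge0 t_ge0 t_le1; rewrite to_b.
have s_ge0 : 0 <= 1 - t by rewrite subr_ge0.
have s_le1 : 1 - t <= 1 by rewrite gerBl.
have := hconc _ _ _ a_ge0 bd_ge0 s_ge0 s_le1.
rewrite to_ad; lra.
Qed.

Section NeighborhoodConfidence.

Variables (R : realFieldType) (T : finType) (sim : T -> T -> R) (C : T -> R)
  (tau : R).
Hypotheses (C_ge0 : forall x, 0 <= C x) (tau_ge0 : 0 <= tau).

Definition neighbor_weight (xi xj : T) : R :=
  (if tau <= sim xi xj then 1 else 0) * sim xi xj * C xj.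

Lemma neighbor_weight_ge0 xi xj : 0 <= neighbor_weight xi xj.
Proof.
rewrite /neighbor_weight; case: ifP => [le_tau_sim|_]; last by rewrite !mul0r.
by rewrite mul1r mulr_ge0 // (le_trans tau_ge0 le_tau_sim).
Qed.

Lemma CN_ge0 (S : {set T}) xi : 0 <= CN sim C tau S xi.
Proof. by apply: sumr_ge0 => xj _; apply: neighbor_weight_ge0. Qed.

Lemma CN_setU1 (S : {set T}) x xi : x \notin S ->
  CN sim C tau (x |: S) xi = CN sim C tau S xi + neighbor_weight xi x.
Proof. by move=> xNS; rewrite /CN big_setU1 //= addrC. Qed.

Lemma CN_subset (S S' : {set T}) xi : S \subset S' ->
  CN sim C tau S xi <= CN sim C tau S' xi.
Proof.
move=> sSS'; rewrite /CN [leRHS](big_setID S) /= (setIidPr sSS') lerDl.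
by apply: sumr_ge0 => xj _; apply: neighbor_weight_ge0.
Qed.

End NeighborhoodConfidence.

Theorem lemma6 (R : realFieldType) (T : finType) (sim : T -> T -> R) (C : T -> R)
  (tau : R) (sigma : R -> R)
  (hC : forall x, 0 <= C x) (htau : 0 <= tau)
  (hmono : nondecr_nonneg sigma) (hconc : concave_nonneg sigma)
  (h0 : sigma 0 = 0)
  (S S' : {set T}) (x : T) (hSS' : S \subset S') (hx : x \notin S') :
  OBJ sim C tau sigma (x |: S') - OBJ sim C tau sigma S'
    <= OBJ sim C tau sigma (x |: S) - OBJ sim C tau sigma S.
Proof.
have xNS : x \notin S by apply: contra hx; apply: subsetP.
rewrite /OBJ -!sumrB; apply: ler_sum => xi _.
rewrite !CN_setU1 //; apply: concave_nonneg_increment_antitone => //.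
- exact: CN_ge0.
- exact: CN_subset.
- exact: neighbor_weight_ge0.
Qed.
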